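(* (1) If $f,g\in\mathcal{P}$, then $\gamma_1 f+\gamma_2 g\in\mathcal{P}$ for all $\gamma_1,\gamma_2\ge0$ (so $\mathcal{P}$ is a convex cone in $\mathcal{L}(G)$). (2) The extreme rays of the cone $\mathcal{P}$ are the sets $\{\gamma u_k:\gamma\ge0\}$, $k\in\{1,\dots,n\}$. (3) $\mathcal{P}_+$ is a convex cone and it is the interior of $\mathcal{P}$. (4) If $f,g\in\mathcal{P}$, then $f\ast g\in\mathcal{P}$. (5) $f\in\mathcal{P}$ if and only if there exists $g\in\mathcal{L}(G)$ with $f=g\ast g$.
   Context: Let $G$ be a graph with vertices $v_1,\dots,v_n$, symmetric non-negative weighted adjacency matrix $\mathbf{A}$, degree matrix $\mathbf{D}=\mathrm{diag}(\sum_k\mathbf{A}_{ik})$ (positive), and normalized Laplacian $\mathbf{L}=\mathbf{I}_n-\mathbf{D}^{-1/2}\mathbf{A}\mathbf{D}^{-1/2}$. Signals are vectors in $\mathcal{L}(G)\cong\mathbb{R}^n$ with standard basis $e_1,\dots,e_n$. Fix an orthonormal eigendecomposition $\mathbf{L}=\mathbf{U}\,\mathrm{diag}(\lambda_1,\dots,\lambda_n)\mathbf{U}^\intercal$ with columns $u_1,\dots,u_n$. Fourier transform $\hat{x}=\mathbf{U}^\intercal x$; convolution $x\ast y=\mathbf{C}_x y$ with $\mathbf{C}_x=\mathbf{U}\,\mathrm{diag}(\hat{x})\mathbf{U}^\intercal$. For $f\in\mathcal{L}(G)$ let $(\mathbf{K}_f)_{ij}=(\mathbf{C}_{e_j}f)(v_i)$;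 $f$ is positive semi-definite (positive definite) if $\mathbf{K}_f$ is symmetric and positive semi-definite (strictly positive definite). $\mathcal{P}$ and $\mathcal{P}_+$ denote the sets of positive semi-definite and positive definite functions, respectively. *)

From HB Require Import structures.
From mathcomp Require Import all_boot all_order all_algebra.
From mathcomp Require Import all_classical all_reals topology matrix_topology normedtype.
Import numFieldNormedType.Exports.
Set Implicit Arguments. Unset Strict Implicit. Unset Printing Implicit Defensive.
Import Order.TTheory GRing.Theory Num.Theory.
Local Open Scope ring_scope.
Local Open Scope classical_set_scope.

Section GSP.
Variables (R : realType) (n : nat).

Definition degv (A : 'M[R]_n) (i : 'I_n) : R := \sum_(k < n) A i k.

Definition Dinvsqrt (A : 'M[R]_n) : 'M[R]_n :=
  diag_mx (\row_i (Num.sqrt (degv A i))^-1).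

Definition normLap (A : 'M[R]_n) : 'M[R]_n :=
  1%:M - Dinvsqrt A *m A *m Dinvsqrt A.

Definition ebasis (j : 'I_n) : 'cV[R]_n := delta_mx j 0.

Definition gft (U : 'M[R]_n) (x : 'cV[R]_n) : 'cV[R]_n := U^T *m x.

Definition convop (U : 'M[R]_n) (x : 'cV[R]_n) : 'M[R]_n :=
  U *m diag_mx (gft U x)^T *m U^T.

Definition gconv (U : 'M[R]_n) (x y : 'cV[R]_n) : 'cV[R]_n := convop U x *m y.

Definition Kmat (U : 'M[R]_n) (f : 'cV[R]_n) : 'M[R]_n :=
  \matrix_(i, j) (convop U (ebasis j) *m f) i 0.

Definition sym_psd (M : 'M[R]_n) : Prop :=
  M^T = M /\ forall v : 'cV[R]_n, 0 <= (v^T *m M *m v) 0 0.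

Definition sym_pd (M : 'M[R]_n) : Prop :=
  M^T = M /\ forall v : 'cV[R]_n, v != 0 -> 0 < (v^T *m M *m v) 0 0.

Definition Ppsd (U : 'M[R]_n) : set 'cV[R]_n := [set f | sym_psd (Kmat U f)].
Definition Ppd (U : 'M[R]_n) : set 'cV[R]_n := [set f | sym_pd (Kmat U f)].

Definition convex_cone (C : set 'cV[R]_n) : Prop :=
  (forall x y, C x -> C y -> C (x + y)) /\
  (forall (g : R) x, 0 < g -> C x -> C (g *: x)).

Definition ray (r : 'cV[R]_n) : set 'cV[R]_n := [set g *: r | g in [set g : R | 0 <= g]].

Definition extreme_ray (C : set 'cV[R]_n) (E : set 'cV[R]_n) : Prop :=
  exists r, [/\ C r, r != 0, E = ray r &
    forall x y, C x -> C y -> E (x + y) -> E x /\ E y].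

End GSP.

From HB Require Import structures.
From mathcomp Require Import all_boot all_order all_algebra.
From mathcomp Require Import all_classical all_reals topology matrix_topology normedtype.
From mathcomp Require Import ring.
Import numFieldNormedType.Exports.
Import Order.TTheory GRing.Theory Num.Theory.
Local Open Scope ring_scope.
Local Open Scope classical_set_scope.

(* Since C_f = U diag(f^) U^T and (C_(e_j) f)(v_i) = (C_f e_j)(v_i), the matrix
   K_f is C_f itself, and for orthogonal U its quadratic form is
   v^T K_f v = sum_k (v^_k)^2 f^_k.  Hence f is in P (resp. P_+) iff all
   Fourier coefficients f^_k are >= 0 (resp. > 0): the Fourier transform, a
   linear isomorphism turning convolution into the pointwise product, maps P
   onto the nonnegative orthant and P_+ onto the open orthant.  All five
   claims are then statements about the orthant: its extreme rays are spanned
   by the basis vectors, whose preimages are the eigenvectors u_k; its interior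
   is the open orthant; it is closed under products and square roots. *)

Section GraphFourier.
Variables (R : realType) (n : nat) (U : 'M[R]_n).

Lemma ray_scale (a : R) (r : 'cV[R]_n) : 0 < a -> ray (a *: r) = ray r.
Proof.
move=> a_gt0; apply/seteqP; split=> x [g /= g_ge0 <-].
  by exists (g * a); rewrite /= ?scalerA // mulr_ge0 // ltW.
exists (g / a); first by rewrite /= divr_ge0 // ltW.
by rewrite scalerA divfK ?gt_eqF.
Qed.

Lemma coef_gftD x y k : gft U (x + y) k 0 = gft U x k 0 + gft U y k 0.
Proof. by rewrite /gft mulmxDr [LHS]mxE. Qed.

Lemma coef_gftZ a x k : gft U (a *: x) k 0 = a * gft U x k 0.
Proof. by rewrite /gft -scalemxAr [LHS]mxE. Qed.

Lemma coef_gftB x y k : gft U (x - y) k 0 = gft U x k 0 - gft U y k 0.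
Proof. by rewrite coef_gftD -scaleN1r coef_gftZ mulN1r. Qed.

Lemma gconvE x y : gconv U x y = U *m (diag_mx (gft U x)^T *m gft U y).
Proof. by rewrite /gconv /convop /gft !mulmxA. Qed.

Lemma gconvC x y : gconv U x y = gconv U y x.
Proof.
rewrite !gconvE; congr (_ *m _); apply/matrixP => i j.
by rewrite (ord1 j) !mul_diag_mx !mxE mulrC.
Qed.

Lemma Kmat_convop f : Kmat U f = convop U f.
Proof.
apply/matrixP => i j.
by rewrite mxE -/(gconv U _ _) gconvC /gconv /ebasis -colE mxE.
Qed.

Lemma convop_sym f : (convop U f)^T = convop U f.
Proof. by rewrite /convop !trmx_mul trmxK tr_diag_mx mulmxA. Qed.

Lemma convop_quad f v :
  (v^T *m convop U f *m v) 0 0 = \sum_k gft U v k 0 ^+ 2 * gft U f k 0.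
Proof.
have vU : v^T *m U = (gft U v)^T by rewrite /gft trmx_mul trmxK.
rewrite /convop -!mulmxA mulmxA vU -/(gft U v) mul_diag_mx mxE.
by apply: eq_bigr => k _; rewrite !mxE; ring.
Qed.

Hypothesis U_orth : U^T *m U = 1%:M.

Lemma gft_mulmx x : gft U (U *m x) = x.
Proof. by rewrite /gft mulmxA U_orth mul1mx. Qed.

Lemma mulmx_gft x : U *m gft U x = x.
Proof. by rewrite /gft mulmxA mulmx1C // mul1mx. Qed.

Lemma gft_inj : injective (gft U).
Proof. exact: can_inj mulmx_gft. Qed.

Lemma gft_eq0 x : (gft U x == 0) = (x == 0).
Proof. by rewrite -[RHS](inj_eq gft_inj) /gft mulmx0. Qed.

Lemma gft_col k : gft U (col k U) = delta_mx k 0.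
Proof. by rewrite colE gft_mulmx. Qed.

Lemma gft_col_coef k l : gft U (col k U) l 0 = (l == k)%:R.
Proof. by rewrite gft_col mxE andbT. Qed.

Lemma col_orth_neq0 k : col k U != 0.
Proof.
rewrite -gft_eq0 gft_col; apply/eqP => /matrixP/(_ k 0)/eqP.
by rewrite !mxE !eqxx oner_eq0.
Qed.

Lemma coef_gft_neq0 x : x != 0 -> exists k, gft U x k 0 != 0.
Proof.
rewrite -gft_eq0 => /eqP x_neq0; apply/existsP.
apply: contra_notT x_neq0 => /existsPn x0; apply/matrixP => i j.
by rewrite (ord1 j) [RHS]mxE; apply/eqP/negbNE; apply: x0.
Qed.

Lemma gft_gconv f g k : gft U (gconv U f g) k 0 = gft U f k 0 * gft U g k 0.
Proof. by rewrite gconvE gft_mulmx mul_diag_mx !mxE. Qed.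

Lemma convop_quad_col f k :
  ((col k U)^T *m convop U f *m col k U) 0 0 = gft U f k 0.
Proof.
rewrite convop_quad gft_col (bigD1 k) //= big1.
  by rewrite mxE !eqxx expr1n mul1r addr0.
by move=> l /negbTE lk; rewrite mxE lk expr0n mul0r.
Qed.

Lemma Ppsd_gftP f : Ppsd U f <-> forall k, 0 <= gft U f k 0.
Proof.
rewrite /Ppsd /sym_psd /= Kmat_convop; split=> [[_ psd] k | f_ge0].
  by rewrite -convop_quad_col.
split=> [|v]; first exact: convop_sym.
by rewrite convop_quad; apply: sumr_ge0 => k _; rewrite mulr_ge0 ?sqr_ge0.
Qed.

Lemma Ppd_gftP f : Ppd U f <-> forall k, 0 < gft U f k 0.
Proof.
rewrite /Ppd /sym_pd /= Kmat_convop; split=> [[_ pd] k | f_gt0].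
  by rewrite -convop_quad_col; apply/pd/col_orth_neq0.
split=> [|v]; first exact: convop_sym.
move=> /coef_gft_neq0[l vl_neq0].
rewrite convop_quad (bigD1 l) //= ltr_pwDl //.
  by rewrite mulr_gt0 ?exprn_even_gt0.
by apply: sumr_ge0 => k _; rewrite mulr_ge0 ?sqr_ge0 ?ltW.
Qed.

Lemma Ppsd_conic f g a b :
  Ppsd U f -> Ppsd U g -> 0 <= a -> 0 <= b -> Ppsd U (a *: f + b *: g).
Proof.
move=> /Ppsd_gftP f_ge0 /Ppsd_gftP g_ge0 a_ge0 b_ge0; apply/Ppsd_gftP => k.
by rewrite coef_gftD !coef_gftZ addr_ge0 ?mulr_ge0.
Qed.

Lemma Ppd_convex_cone : convex_cone (Ppd U).
Proof.
split=> [f g /Ppd_gftP f_gt0 /Ppd_gftP g_gt0 | a f a_gt0 /Ppd_gftP f_gt0];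
  apply/Ppd_gftP => k; first by rewrite coef_gftD addr_gt0.
by rewrite coef_gftZ mulr_gt0.
Qed.

Lemma Ppsd_gconv f g : Ppsd U f -> Ppsd U g -> Ppsd U (gconv U f g).
Proof.
move=> /Ppsd_gftP f_ge0 /Ppsd_gftP g_ge0; apply/Ppsd_gftP => k.
by rewrite gft_gconv mulr_ge0.
Qed.

Lemma Ppsd_gconv_sqrP f : Ppsd U f <-> exists g, f = gconv U g g.
Proof.
split=> [/Ppsd_gftP f_ge0 | [g ->]]; last first.
  by apply/Ppsd_gftP => k; rewrite gft_gconv -expr2 sqr_ge0.
exists (U *m map_mx Num.sqrt (gft U f)); apply: gft_inj; apply/matrixP => k j.
by rewrite (ord1 j) gft_gconv gft_mulmx [map_mx _ _ _ _]mxE -expr2 sqr_sqrtr.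
Qed.

Lemma Ppsd_col k : Ppsd U (col k U).
Proof. by apply/Ppsd_gftP => l; rewrite gft_col_coef ler0n. Qed.

Lemma ray_colP k x :
  ray (col k U) x <-> 0 <= gft U x k 0 /\ forall l, l != k -> gft U x l 0 = 0.
Proof.
split=> [[a /= a_ge0 <-] | [xk_ge0 x_offk]].
  rewrite coef_gftZ gft_col_coef eqxx mulr1; split=> // l /negbTE lk.
  by rewrite coef_gftZ gft_col_coef lk mulr0.
exists (gft U x k 0) => //; apply: gft_inj; apply/matrixP => l j.
rewrite (ord1 j) coef_gftZ gft_col_coef.
by have [->|/x_offk->] := eqVneq l k; rewrite ?mulr1 ?mulr0n ?mulr0.
Qed.

Lemma extreme_ray_col k : extreme_ray (Ppsd U) (ray (col k U)).
Proof.
exists (col k U); split=> //; [exact: Ppsd_col | exact: col_orth_neq0 |].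
move=> x y /Ppsd_gftP x_ge0 /Ppsd_gftP y_ge0 /ray_colP[_ xy_offk].
have summand_off z w :
    (forall l, 0 <= gft U z l 0) -> (forall l, 0 <= gft U w l 0) ->
    (forall l, l != k -> gft U (z + w) l 0 = 0) -> ray (col k U) z.
  move=> z_ge0 w_ge0 zw_offk; apply/ray_colP; split=> // l lk.
  by have /eqP := zw_offk l lk; rewrite coef_gftD paddr_eq0 // => /andP[/eqP].
split; first exact: summand_off xy_offk.
by apply: summand_off y_ge0 x_ge0 _; rewrite addrC.
Qed.

Lemma extreme_ray_colP E :
  extreme_ray (Ppsd U) E <-> exists k, E = ray (col k U).
Proof.
split=> [[r [/Ppsd_gftP r_ge0 r_neq0 -> r_extreme]] | [k ->]]; last first.
  exact: extreme_ray_col.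
have /coef_gft_neq0[k rk_neq0] := r_neq0.
have rk_gt0 : 0 < gft U r k 0 by rewrite lt_def rk_neq0 r_ge0.
(* Split r into its k-th Fourier component x and the rest r - x; extremality
   puts r - x on the ray of r, and its k-th coefficient vanishes, so r = x. *)
set x := gft U r k 0 *: col k U.
have x_psd : Ppsd U x.
  apply/Ppsd_gftP => l.
  by rewrite coef_gftZ gft_col_coef mulr_ge0 ?ler0n // ltW.
have rx_psd : Ppsd U (r - x).
  apply/Ppsd_gftP => l; rewrite coef_gftB coef_gftZ gft_col_coef.
  by have [->|_] := eqVneq l k; rewrite ?mulr1 ?subrr // mulr0 subr0.
have r_ray : ray r (x + (r - x)).
  by rewrite addrC subrK; exists 1; rewrite /= ?ler01 ?scale1r.
have [_ [h _ rx_eq]] := r_extreme _ _ x_psd rx_psd r_ray.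
have h0 : h = 0.
  have /eqP := congr1 (fun z => gft U z k 0) rx_eq.
  rewrite /= !coef_gftZ coef_gftB coef_gftZ gft_col_coef eqxx mulr1 subrr.
  by rewrite mulf_eq0 (negbTE rk_neq0) orbF => /eqP.
have -> : r = x by apply/eqP; rewrite -subr_eq0 -rx_eq h0 scale0r.
by exists k; apply: ray_scale.
Qed.

Lemma coef_gft_continuous k : continuous (fun f : 'cV[R]_n => gft U f k 0).
Proof.
have -> : (fun f => gft U f k 0) = fun f : 'cV[R]_n => \sum_l U^T k l * f l 0.
  by apply/funext => f; rewrite mxE.
apply: (@continuous_big _ _ +%R 0 xpredT add_continuous) => l _ f.
by apply: continuousM; [exact: cst_continuous | exact: coord_continuous].
Qed.

Lemma Ppd_sub_interior : Ppd U `<=` interior (Ppsd U).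
Proof.
move=> f /Ppd_gftP f_gt0.
have : \forall g \near f, forall k, 0 < gft U g k 0.
  apply: (@filter_forall _ _ (fun k g => 0 < gft U g k 0) (nbhs f) _) => k.
  apply: (coef_gft_continuous k f [set x | 0 < x]).
  by apply: open_nbhs_nbhs; split; [exact: open_gt | exact: f_gt0].
by apply: filterS => g g_gt0; apply/Ppsd_gftP => k; exact/ltW/g_gt0.
Qed.

Lemma interior_sub_Ppd : interior (Ppsd U) `<=` Ppd U.
Proof.
move=> f f_int; apply/Ppd_gftP => k.
have /Ppsd_gftP f_ge0 := nbhs_singleton f_int.
rewrite lt_def f_ge0 andbT; apply/eqP => fk0.
(* If f^_k = 0, moving from f in the direction -u_k leaves P at once. *)
have path_cont : {for 0, continuous (fun t : R => f - t *: col k U)}.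
  apply: continuousB; first exact: cst_continuous.
  by apply: continuousZ; [exact: cvg_id | exact: cst_continuous].
have path_nbhs : \forall t \near 0, Ppsd U (f - t *: col k U).
  by apply: path_cont; rewrite scale0r subr0.
have /filter_ex [t [t_gt0 /Ppsd_gftP /(_ k)]] :
    \forall t \near 0^'+, 0 < t /\ Ppsd U (f - t *: col k U).
  by apply: filterI; [exact: nbhs_right_gt | apply: filterS path_nbhs].
rewrite coef_gftB coef_gftZ gft_col_coef eqxx mulr1 fk0 sub0r.
by rewrite oppr_ge0 leNgt t_gt0.
Qed.

Lemma Ppd_interior : Ppd U = interior (Ppsd U).
Proof. by apply/seteqP; split; [exact: Ppd_sub_interior | exact: interior_sub_Ppd]. Qed.

End GraphFourier.

Theorem corollary1 (R : realType) (n : nat) (A : 'M[R]_n)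
  (U : 'M[R]_n) (lam : 'rV[R]_n) :
  A^T = A ->
  (forall i j, 0 <= A i j) ->
  (forall i, 0 < degv A i) ->
  U^T *m U = 1%:M ->
  normLap A = U *m diag_mx lam *m U^T ->
  [/\ (* (1) *)
      (forall f g (g1 g2 : R), Ppsd U f -> Ppsd U g -> 0 <= g1 -> 0 <= g2 ->
         Ppsd U (g1 *: f + g2 *: g)),
      (* (2) *)
      (forall E : set 'cV[R]_n,
         extreme_ray (Ppsd U) E <-> exists k : 'I_n, E = ray (col k U)),
      (* (3) *)
      convex_cone (Ppd U) /\ Ppd U = interior (Ppsd U),
      (* (4) *)
      (forall f g, Ppsd U f -> Ppsd U g -> Ppsd U (gconv U f g)) &
      (* (5) *)
      (forall f, Ppsd U f <-> exists g, f = gconv U g g)].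
Proof.
move=> _ _ _ U_orth _; split.
- exact: Ppsd_conic.
- exact: extreme_ray_colP.
- by split; [exact: Ppd_convex_cone | exact: Ppd_interior].
- exact: Ppsd_gconv.
- exact: Ppsd_gconv_sqrP.
Qed.
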